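(* Let $X \sim \pi_0$ on $\mathcal{X}$, let $X \to W \to Z = M(W)$ be a Markov chain where $M$ is $\varepsilon$-locally differentially private in the density sense (there is a $\sigma$-finite $\mu$ with $M(w)$ having density $q(\cdot\mid w)$ w.r.t. $\mu$ and $q(z\mid w)\le e^{\varepsilon} q(z\mid w')$ for all $z,w,w'$). Let $f : \mathcal{X} \to \mathbb{R}^k$ be measurable, $L_{\rm rec} : \mathbb{R}^k \times \mathbb{R}^k \to \mathbb{R}_+$ a measurable loss, $\alpha \ge 0$ and $p(\alpha) \in [0,1]$. Suppose that \[ \mathbb{P}_{\pi_0}\big(L_{\rm rec}(f(X), v_0) \le \alpha\big) \le p(\alpha) \quad \text{for all fixed } v_0 \in \mathbb{R}^k. \] Then $M$ is $(\alpha, e^{\varepsilon} p(\alpha), f)$-protected against reconstruction for $L_{\rm rec}$; that is, for every measurable estimator $\widehat v : \mathcal{Z} \to \mathbb{R}^k$ and (almost) every $z$, \[ \mathbb{P}\big(L_{\rm rec}(f(X), \widehat v(z)) \le \alpha \,\big|\, Z = z\big) \le e^{\varepsilon} p(\alpha). \]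
   Context: $\varepsilon$-local differential privacy of $M$: $\mathbb{P}(M(w)\in S)\le e^{\varepsilon}\mathbb{P}(M(w')\in S)$ for all inputs $w,w'$ and measurable $S$. A mechanism $M$ is $(\alpha,p,f)$-protected against reconstruction for loss $L_{\rm rec}$ if for every estimator $\widehat v:\mathcal Z\to\mathbb R^k$, $\sup_z \mathbb P(L_{\rm rec}(f(X),\widehat v(z))\le\alpha \mid M(W)=z)\le p$. *)

From HB Require Import structures.
From mathcomp Require Import all_boot all_order all_algebra.
From mathcomp Require Import all_classical all_reals all_analysis.
Set Implicit Arguments. Unset Strict Implicit. Unset Printing Implicit Defensive.
Import Order.TTheory GRing.Theory Num.Theory.
Import numFieldNormedType.Exports.
Local Open Scope classical_set_scope.
Local Open Scope ring_scope.

Definition Rk (R : realType) (k : nat) : measurableType _ :=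
  g_sigma_algebraType (@open 'rV[R]_k).

Definition ldp_density (R : realType) (W Z : Type) (q : W -> Z -> R) (eps : R) :=
  forall z w w', q w z <= expR eps * q w' z.

(* Joint law of (X, Z) for the Markov chain X -> W -> Z = M(W) with
   X ~ pi0, W | X=x ~ kappa x, and Z | W=w having density q w . wrt mu. *)
Definition jointXZ (R : realType) dX dW dZ (X : measurableType dX)
  (W : measurableType dW) (Z : measurableType dZ)
  (pi0 : {measure set X -> \bar R}) (kappa : X -> {measure set W -> \bar R})
  (mu : {measure set Z -> \bar R}) (q : W -> Z -> R) (C : set (X * Z)) : \bar R :=
  (\int[pi0]_x \int[kappa x]_w \int[mu]_z ((\1_C (x, z))%:E * (q w z)%:E))%E.

Definition lawZ (R : realType) dX dW dZ (X : measurableType dX)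
  (W : measurableType dW) (Z : measurableType dZ)
  (pi0 : {measure set X -> \bar R}) (kappa : X -> {measure set W -> \bar R})
  (mu : {measure set Z -> \bar R}) (q : W -> Z -> R) (B : set Z) : \bar R :=
  jointXZ pi0 kappa mu q (setT `*` B).

(* g is a version of the conditional probability P((X,Z) \in E | Z), i.e.
   g(z) = P(E | Z = z): g is measurable and for every measurable B,
   P(E /\ Z \in B) = \int_B g d(law of Z)   (the latter written as the
   integral against the composite measure defining the law of Z). *)
Definition cond_prob_given_Z (R : realType) dX dW dZ (X : measurableType dX)
  (W : measurableType dW) (Z : measurableType dZ)
  (pi0 : {measure set X -> \bar R}) (kappa : X -> {measure set W -> \bar R})
  (mu : {measure set Z -> \bar R}) (q : W -> Z -> R) (E : set (X * Z))
  (g : Z -> R) :=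
  measurable_fun setT g /\
  forall B : set Z, measurable B ->
    jointXZ pi0 kappa mu q (E `&` (setT `*` B)) =
    (\int[pi0]_x \int[kappa x]_w \int[mu]_(z in B) ((g z)%:E * (q w z)%:E))%E.

From HB Require Import structures.
From mathcomp Require Import all_boot all_order all_algebra.
From mathcomp Require Import all_classical all_reals all_analysis.
From mathcomp Require Import measurable_realfun.
Set Implicit Arguments. Unset Strict Implicit. Unset Printing Implicit Defensive.
Import Order.TTheory GRing.Theory Num.Theory.
Import numFieldNormedType.Exports.
Local Open Scope classical_set_scope.
Local Open Scope ring_scope.

(* Let m(z) = E_X[Q(X, z)] be the density of Z w.r.t. mu, where Q(x, z) is the
   density of Z given X = x.  Local differential privacy gives
   Q(x, z) <= e^eps m(z), so for every measurable S,
     P(L(f X, vhat Z) <= alpha, Z in S)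
       = int_S int 1[L(f x, vhat z) <= alpha] Q(x, z) dpi0(x) dmu(z)
      <= e^eps int_S pi0(L(f X, vhat z) <= alpha) m(z) dmu(z)
      <= e^eps p int_S m dmu.
   The left-hand side is int_S g m dmu, so g has average at most e^eps p on
   every subset of {g > e^eps p}, which forces that set to be m dmu-null. *)

Local Open Scope ereal_scope.

Lemma integral_set_indic d (T : measurableType d) (R : realType)
    (mu : {measure set T -> \bar R}) (S : set T) (f : T -> \bar R) :
  \int[mu]_(x in S) f x = \int[mu]_x ((\1_S x)%:E * f x).
Proof.
by rewrite integral_mkcond epatch_indic; apply: eq_integral => x _ /=; rewrite muleC.
Qed.

Lemma sigma_finite_measureP d (T : measurableType d) (R : realType)
    (mu : {measure set T -> \bar R}) : sigma_finite setT mu ->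
  exists nu : {sigma_finite_measure set T -> \bar R},
    mu = nu :> {measure set T -> \bar R}.
Proof.
move=> mu_sigma.
pose mu_sfinite := isSFinite.Build _ _ _ _ (sfinite_measure_sigma_finite mu_sigma).
pose mu_sigma' := isSigmaFinite.Build _ _ _ _ mu_sigma.
exists (HB.pack_for (SigmaFiniteMeasure.type T R) (Measure.sort mu)
  mu_sfinite mu_sigma').
exact: eq_measure.
Qed.

Lemma sigma_finite_fubini_tonelli (R : realType) d1 d2
    (T1 : measurableType d1) (T2 : measurableType d2)
    (m1 : {measure set T1 -> \bar R}) (m2 : {measure set T2 -> \bar R})
    (f : T1 * T2 -> \bar R) :
  sigma_finite setT m1 -> sigma_finite setT m2 ->
  measurable_fun setT f -> (forall z, 0 <= f z) ->
  \int[m1]_x \int[m2]_y f (x, y) = \int[m2]_y \int[m1]_x f (x, y).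
Proof.
move=> /sigma_finite_measureP[m1' ->] /sigma_finite_measureP[m2' ->].
exact: fubini_tonelli.
Qed.

Lemma sigma_finite_fkernel d d' (X : measurableType d) (Y : measurableType d')
    (R : realType) (k : R.-fker X ~> Y) (x : X) : sigma_finite setT (k x).
Proof.
apply: fin_num_fun_sigma_finite; first by rewrite measure0.
exact: kernel_finite_transition.
Qed.

Section integral_mass1.
Context d (T : measurableType d) (R : realType) (P : {measure set T -> \bar R}).
Hypothesis P1 : P setT = 1.
Variable f : T -> \bar R.
Hypotheses (mf : measurable_fun setT f) (f_ge0 : forall x, 0 <= f x).

Lemma integral_le_mass1 a : (forall x, f x <= a) -> \int[P]_x f x <= a.
Proof.
move=> fa; rewrite -[leRHS]mule1 -P1 -integral_cst //.
by apply: ge0_le_integral => // x _; exact: fa.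
Qed.

Lemma integral_ge_mass1 a : 0 <= a -> (forall x, a <= f x) -> a <= \int[P]_x f x.
Proof.
move=> a_ge0 af; rewrite -[leLHS]mule1 -P1 -integral_cst //.
by apply: ge0_le_integral => // x _; exact: af.
Qed.

End integral_mass1.

Section integral_gt_cst.
Context d (T : measurableType d) (R : realType) (mu : {measure set T -> \bar R}).
Variables (m : T -> \bar R) (g : T -> R) (c : R).
Hypotheses (mm : measurable_fun setT m) (m_ge0 : forall z, 0 <= m z)
  (m_fin : \int[mu]_z m z < +oo) (mg : measurable_fun setT g) (c_ge0 : (0 <= c)%R).
Hypothesis avg_le : forall S, measurable S -> S `<=` [set z | c < g z]%R ->
  \int[mu]_(z in S) ((g z)%:E * m z) <= c%:E * \int[mu]_(z in S) m z.

Let measurable_gt r : measurable [set z | r < g z]%R.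
Proof. by rewrite -preimage_itvoy -[X in measurable X]setTI; exact: mg. Qed.

Lemma integral_gt_level_eq0 r : (c < r)%R ->
  \int[mu]_(z in [set z | r < g z]%R) m z = 0.
Proof.
move=> cr; set S := [set z | _].
have Sc : S `<=` [set z | c < g z]%R by move=> z /= /(lt_trans cr).
have r_ge0 : (0 <= r)%R by rewrite (le_trans c_ge0) ?ltW.
have S_fin : \int[mu]_(z in S) m z < +oo.
  apply: le_lt_trans m_fin; apply: ge0_subset_integral => //.
  exact: measurable_gt.
have rS : r%:E * \int[mu]_(z in S) m z <= c%:E * \int[mu]_(z in S) m z.
  apply: le_trans; last exact: (avg_le (measurable_gt r) Sc).
  rewrite -(ge0_integralZl _ (measurable_gt r) (measurable_funTS mm)) ?lee_fin //.
  apply: ge0_le_integral => //.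
  - by move=> z _; rewrite mule_ge0 ?lee_fin.
  - exact/measurable_funeM/measurable_funTS.
  - by apply: emeasurable_funM; [exact/measurable_EFinP/measurable_funTS|
                                  exact: measurable_funTS].
  - by move=> z /ltW rg; rewrite lee_wpmul2r ?lee_fin.
have : 0 <= \int[mu]_(z in S) m z by exact: integral_ge0.
move: S_fin rS; case: (\int[mu]_(z in S) m z) => [x| |] //= _.
rewrite -!EFinM !lee_fin => rx x_ge0; congr EFin; apply/eqP.
have rc : (0 < r - c)%R by rewrite subr_gt0.
by rewrite eq_le x_ge0 andbT -(pmulr_rle0 _ rc) mulrBl subr_le0.
Qed.

Lemma integral_gt_cst_eq0 : \int[mu]_(z in [set z | c < g z]%R) m z = 0.
Proof.
pose B n := [set z | c + n.+1%:R^-1 < g z]%R.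
have -> : [set z | c < g z]%R = \bigcup_n B n.
  apply/seteqP; split => [z /ltr_add_invr[n] | z [n _]] /=; first by exists n.
  by apply: lt_trans; rewrite ltrDl invr_gt0.
have B_nd : nondecreasing_seq B.
  move=> i j ij; apply/subsetPset => z /=; apply: le_lt_trans.
  by rewrite lerD2l lef_pV2 ?posrE // ler_nat.
have := @ge0_nondecreasing_set_cvg_integral _ _ _ B m mu B_nd
  (fun n => measurable_gt _) (fun n => measurable_funTS mm) (fun _ z _ => m_ge0 z).
rewrite (_ : (fun n => \int[mu]_(z in B n) m z) = cst 0); last first.
  by apply/funext => n; rewrite integral_gt_level_eq0 // ltrDl invr_gt0.
by move/cvg_lim => <- //; rewrite lim_cst.
Qed.

End integral_gt_cst.

Section kprecomp.
Context d d' d'' (T : measurableType d) (X : measurableType d')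
  (Y : measurableType d'') (R : realType).
Variables (k : R.-pker X ~> Y) (phi : T -> X).

Definition kprecomp (mphi : measurable_fun setT phi) (t : T) :
  {measure set Y -> \bar R} := k (phi t).

Hypothesis mphi : measurable_fun setT phi.

Let measurable_kprecomp U : measurable U ->
  measurable_fun setT (kprecomp mphi ^~ U).
Proof. by move=> mU; exact: measurableT_comp (measurable_kernel k U mU) mphi. Qed.

HB.instance Definition _ := isKernel.Build _ _ _ _ _ (kprecomp mphi)
  measurable_kprecomp.

Let kprecomp_prob t : kprecomp mphi t setT = 1.
Proof. exact: prob_kernel. Qed.

HB.instance Definition _ := Kernel_isProbability.Build _ _ _ _ _
  (kprecomp mphi) kprecomp_prob.

End kprecomp.

Section markov_chain_density.
Context (R : realType) (dX dW dZ : measure_display)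
  (X : measurableType dX) (W : measurableType dW) (Z : measurableType dZ).
Variables (pi0 : probability X R) (kappa : R.-pker X ~> W)
  (mu : {measure set Z -> \bar R}) (q : W -> Z -> R).
Hypotheses (mu_sigma : sigma_finite setT mu)
  (mq : measurable_fun setT (fun wz : W * Z => q wz.1 wz.2))
  (q_ge0 : forall w z, (0 <= q w z)%R).

Definition cond_densityZ (xz : X * Z) : \bar R := \int[kappa xz.1]_w (q w xz.2)%:E.

Definition densityZ (z : Z) : \bar R := \int[pi0]_x cond_densityZ (x, z).

Lemma measurable_q_at z : measurable_fun setT (q ^~ z).
Proof.
exact: (measurableT_comp (f := fun wz : W * Z => q wz.1 wz.2) (g := fun w => (w, z))).
Qed.

Lemma cond_densityZ_ge0 xz : 0 <= cond_densityZ xz.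
Proof. by apply: integral_ge0 => w _; rewrite lee_fin. Qed.

Lemma measurable_cond_densityZ : measurable_fun setT cond_densityZ.
Proof.
apply: (measurable_fun_integral_finite_kernel (fun p : (X * Z) * W => (q p.2 p.1.2)%:E)
  (kprecomp kappa (@measurable_fst _ _ X Z))).
  by move=> ?; rewrite lee_fin.
apply/measurable_EFinP.
apply: (measurableT_comp (f := fun wz : W * Z => q wz.1 wz.2)
  (g := fun p : (X * Z) * W => (p.2, p.1.2))) => //.
exact: measurable_fun_pair measurable_snd (measurableT_comp measurable_snd measurable_fst).
Qed.

Lemma measurable_cond_densityZ_at z : measurable_fun setT (fun x => cond_densityZ (x, z)).
Proof.
apply: (measurableT_comp (f := cond_densityZ) (g := fun x => (x, z)))
  measurable_cond_densityZ _.
exact: measurable_fun_pair.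
Qed.

Lemma measurable_integral_pi0 (F : X * Z -> \bar R) :
  measurable_fun setT F -> (forall xz, 0 <= F xz) ->
  measurable_fun setT (fun z => \int[pi0]_x F (x, z)).
Proof.
move=> mF F_ge0.
apply: (measurable_fun_fubini_tonelli_F (fun zx : Z * X => F (zx.2, zx.1))) => //.
apply: (measurableT_comp (f := F) (g := fun zx : Z * X => (zx.2, zx.1))) mF _.
exact: measurable_fun_pair.
Qed.

Lemma densityZ_ge0 z : 0 <= densityZ z.
Proof. by apply: integral_ge0 => x _; exact: cond_densityZ_ge0. Qed.

Lemma measurable_densityZ : measurable_fun setT densityZ.
Proof.
exact: measurable_integral_pi0 measurable_cond_densityZ cond_densityZ_ge0.
Qed.

Lemma integral_pi0_scale (r : R) z : (0 <= r)%R ->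
  \int[pi0]_x (r%:E * cond_densityZ (x, z)) = r%:E * densityZ z.
Proof.
move=> r_ge0; rewrite ge0_integralZl ?lee_fin //.
  exact: measurable_cond_densityZ_at.
by move=> x _; exact: cond_densityZ_ge0.
Qed.

Lemma jointXZ_integral (h : X * Z -> R) :
  measurable_fun setT h -> (forall xz, (0 <= h xz)%R) ->
  \int[pi0]_x \int[kappa x]_w \int[mu]_z ((h (x, z))%:E * (q w z)%:E) =
  \int[mu]_z \int[pi0]_x ((h (x, z))%:E * cond_densityZ (x, z)).
Proof.
move=> mh h_ge0.
transitivity (\int[pi0]_x \int[mu]_z ((h (x, z))%:E * cond_densityZ (x, z))).
  apply: eq_integral => x _.
  rewrite (sigma_finite_fubini_tonelli
    (f := fun wz => (h (x, wz.2))%:E * (q wz.1 wz.2)%:E)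
    (sigma_finite_fkernel kappa x) mu_sigma) /=; last 2 first.
  - apply: emeasurable_funM; apply/measurable_EFinP => //.
    apply: (measurableT_comp (f := h) (g := fun wz : W * Z => (x, wz.2))) mh _.
    exact: measurable_fun_pair.
  - by move=> ?; rewrite -EFinM lee_fin mulr_ge0.
  apply: eq_integral => z _; rewrite ge0_integralZl ?lee_fin //.
  - exact/measurable_EFinP/measurable_q_at.
  - by move=> ? _; rewrite lee_fin.
apply: (sigma_finite_fubini_tonelli (f := fun xz => (h xz)%:E * cond_densityZ xz)).
- exact: sigma_finiteT.
- exact: mu_sigma.
- apply: emeasurable_funM measurable_cond_densityZ; exact/measurable_EFinP.
- by move=> ?; rewrite mule_ge0 ?lee_fin ?cond_densityZ_ge0.
Qed.

Lemma lawZE S : measurable S ->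
  lawZ pi0 kappa mu q S = \int[mu]_(z in S) densityZ z.
Proof.
move=> mS; rewrite /lawZ /jointXZ [RHS]integral_set_indic.
rewrite (jointXZ_integral (h := \1_(setT `*` S))) //; last first.
  by apply: measurable_indic; exact: measurableX.
apply: eq_integral => z _; rewrite -integral_pi0_scale //.
by apply: eq_integral => x _; rewrite !indicE in_setX in_setT.
Qed.

Lemma integral_densityZ : (forall w, \int[mu]_z (q w z)%:E = 1) ->
  \int[mu]_z densityZ z = 1.
Proof.
move=> q1; rewrite -lawZE // /lawZ /jointXZ setXTT.
rewrite -(probability_setT pi0) -[RHS]mul1e -integral_cst //.
apply: eq_integral => x _; rewrite -(@prob_kernel _ _ _ _ _ kappa x) -[RHS]mul1e -integral_cst //.
apply: eq_integral => w _; rewrite -(q1 w).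
by apply: eq_integral => z _; rewrite indicT mul1e.
Qed.

Lemma cond_densityZ_le (eps : R) : ldp_density q eps ->
  forall x z, cond_densityZ (x, z) <= (expR eps)%:E * densityZ z.
Proof.
move=> ldp x z.
have mqz : measurable_fun setT (fun w => (q w z)%:E).
  exact/measurable_EFinP/measurable_q_at.
have q_le_cond w x' : (q w z)%:E <= (expR eps)%:E * cond_densityZ (x', z).
  rewrite /cond_densityZ /= -ge0_integralZl //; last by move=> ? _; rewrite lee_fin.
  apply: integral_ge_mass1 => //; first exact: prob_kernel.
  - exact: measurable_funeM.
  - by rewrite lee_fin q_ge0.
  - by move=> w'; rewrite -EFinM lee_fin ldp.
have q_le_density w : (q w z)%:E <= (expR eps)%:E * densityZ z.
  rewrite /densityZ -ge0_integralZl //; first last.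
  - by move=> ? _; exact: cond_densityZ_ge0.
  - exact: measurable_cond_densityZ_at.
  apply: (integral_ge_mass1 (probability_setT pi0) _ _ (q_le_cond w)).
  - exact/measurable_funeM/measurable_cond_densityZ_at.
  - by rewrite lee_fin q_ge0.
apply: (integral_le_mass1 (@prob_kernel _ _ _ _ _ kappa x) _ _ q_le_density) => //.
by move=> w; rewrite lee_fin.
Qed.

Lemma cond_integralE (g : Z -> R) S : measurable_fun setT g -> measurable S ->
  (forall z, S z -> (0 <= g z)%R) ->
  \int[pi0]_x \int[kappa x]_w \int[mu]_(z in S) ((g z)%:E * (q w z)%:E) =
  \int[mu]_(z in S) ((g z)%:E * densityZ z).
Proof.
move=> mg mS g_ge0; pose gS z := (\1_S z * g z)%R.
have gS_ge0 z : (0 <= gS z)%R.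
  rewrite /gS indicE; case: (boolP (z \in S)) => [/set_mem/g_ge0 gz | _].
  - by rewrite mul1r.
  - by rewrite mul0r.
have mgS : measurable_fun setT gS.
  by apply: measurable_funM => //; exact: measurable_indic.
transitivity (\int[pi0]_x \int[kappa x]_w \int[mu]_z ((gS (x, z).2)%:E * (q w z)%:E)).
  do 2 (apply: eq_integral => ? _); rewrite [LHS]integral_set_indic.
  by apply: eq_integral => z _; rewrite /gS EFinM muleA.
rewrite (jointXZ_integral (h := fun xz => gS xz.2)) //; last first.
  exact: (measurableT_comp (f := gS) (g := snd)).
rewrite [RHS]integral_set_indic.
by apply: eq_integral => z _; rewrite /= integral_pi0_scale // EFinM muleA.
Qed.

Lemma integral_section_le (eps p : R) (E : set (X * Z)) z :
  ldp_density q eps -> measurable E -> pi0 (ysection E z) <= p%:E ->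
  \int[pi0]_x ((\1_(ysection E z) x)%:E * cond_densityZ (x, z)) <=
    (expR eps * p)%:E * densityZ z.
Proof.
move=> ldp mE section_le.
have mEz : measurable (ysection E z) by exact: measurable_ysection.
have mindic_Ez : measurable_fun setT (fun x => (\1_(ysection E z) x : R)%:E).
  exact/measurable_EFinP/measurable_indic.
apply: (@le_trans _ _ (\int[pi0]_x ((\1_(ysection E z) x)%:E *
                                     ((expR eps)%:E * densityZ z)))).
  apply: ge0_le_integral => //.
  - by move=> x _; rewrite mule_ge0 ?lee_fin ?cond_densityZ_ge0.
  - by apply: emeasurable_funM => //; exact: measurable_cond_densityZ_at.
  - exact: emeasurable_funM.
  - by move=> x _; rewrite lee_wpmul2l ?lee_fin ?cond_densityZ_le.
rewrite (ge0_integralZr _ measurableT mindic_Ez); first last.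
- by rewrite mule_ge0 ?lee_fin ?expR_ge0 ?densityZ_ge0.
- by move=> x _; rewrite lee_fin.
rewrite integral_indic // setIT EFinM -muleA [leLHS]muleCA.
apply: lee_wpmul2l; first by rewrite lee_fin expR_ge0.
by apply: lee_wpmul2r; first exact: densityZ_ge0.
Qed.

Lemma jointXZ_le (eps p : R) (E : set (X * Z)) S :
  ldp_density q eps -> (0 <= p)%R -> measurable E -> measurable S ->
  (forall z, pi0 (ysection E z) <= p%:E) ->
  jointXZ pi0 kappa mu q (E `&` (setT `*` S)) <=
    (expR eps * p)%:E * \int[mu]_(z in S) densityZ z.
Proof.
move=> ldp p_ge0 mE mS section_le.
have mES : measurable (E `&` (setT `*` S)).
  exact: measurableI mE (measurableX measurableT mS).
have indic_ES x z :
    \1_(E `&` (setT `*` S)) (x, z) = (\1_S z * \1_(ysection E z) x : R)%R.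
  by rewrite !indicE mem_ysection in_setI in_setX in_setT /= -natrM mulnb andbC.
rewrite /jointXZ (jointXZ_integral (h := \1_(E `&` (setT `*` S)))) //.
have mS_density : measurable_fun setT (fun z => (\1_S z : R)%:E * densityZ z).
  by apply: emeasurable_funM measurable_densityZ; exact/measurable_EFinP/measurable_indic.
rewrite (@integral_set_indic _ _ _ mu S) -(ge0_integralZl _ measurableT mS_density);
  first last.
- by rewrite lee_fin mulr_ge0 ?expR_ge0.
- by move=> z _; rewrite mule_ge0 ?lee_fin ?densityZ_ge0.
apply: ge0_le_integral => //.
- by move=> z _; apply: integral_ge0 => x _; rewrite mule_ge0 ?lee_fin ?cond_densityZ_ge0.
- apply: (measurable_integral_pi0
    (F := fun xz => (\1_(E `&` (setT `*` S)) xz)%:E * cond_densityZ xz)).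
    apply: emeasurable_funM measurable_cond_densityZ.
    exact/measurable_EFinP/measurable_indic.
  by move=> xz; rewrite mule_ge0 ?lee_fin ?cond_densityZ_ge0.
- exact: measurable_funeM.
move=> z _; under eq_integral do rewrite indic_ES EFinM -muleA.
rewrite ge0_integralZl ?lee_fin //; first last.
- by move=> x _; rewrite mule_ge0 ?lee_fin ?cond_densityZ_ge0.
- apply: emeasurable_funM (measurable_cond_densityZ_at z).
  exact/measurable_EFinP/measurable_indic/measurable_ysection.
rewrite [leRHS]muleCA; apply: lee_wpmul2l; first by rewrite lee_fin.
exact: integral_section_le.
Qed.

End markov_chain_density.

Local Close Scope ereal_scope.

Theorem lemma2p2 (R : realType) (dX dW dZ : measure_display)
  (X : measurableType dX) (W : measurableType dW) (Z : measurableType dZ)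
  (k : nat)
  (pi0 : probability X R) (kappa : R.-pker X ~> W)
  (mu : {measure set Z -> \bar R}) (q : W -> Z -> R) (eps : R)
  (f : X -> Rk R k) (Lrec : Rk R k -> Rk R k -> R)
  (alpha p : R) :
  sigma_finite setT mu ->
  measurable_fun setT (fun wz : W * Z => q wz.1 wz.2) ->
  (forall w z, 0 <= q w z) ->
  (forall w, (\int[mu]_z (q w z)%:E = 1)%E) ->
  ldp_density q eps ->
  measurable_fun setT f ->
  measurable_fun setT (fun uv : Rk R k * Rk R k => Lrec uv.1 uv.2) ->
  (forall u v, 0 <= Lrec u v) ->
  0 <= alpha -> 0 <= p <= 1 ->
  (forall v0 : Rk R k, pi0 [set x | (Lrec (f x) v0 <= alpha)%R] <= p%:E)%E ->
  forall (vhat : Z -> Rk R k), measurable_fun setT vhat ->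
  forall g : Z -> R,
    cond_prob_given_Z pi0 kappa mu q
      [set xz | Lrec (f xz.1) (vhat xz.2) <= alpha] g ->
    lawZ pi0 kappa mu q [set z | expR eps * p < g z] = 0%E.
Proof.
move=> mu_sigma mq q_ge0 q1 ldp mf mL _ _ /andP[p_ge0 _] section_le vhat mvhat g
  [mg cond_g].
set E := [set xz | Lrec (f xz.1) (vhat xz.2) <= alpha].
have mE : measurable E.
  have mLfv : measurable_fun setT (fun xz : X * Z => Lrec (f xz.1) (vhat xz.2)).
    apply: (measurableT_comp (f := fun uv : Rk R k * Rk R k => Lrec uv.1 uv.2)
      (g := fun xz : X * Z => (f xz.1, vhat xz.2))) => //.
    exact: measurable_fun_pair (measurableT_comp mf measurable_fst)
      (measurableT_comp mvhat measurable_snd).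
  by have := mLfv measurableT _ (measurable_itv `]-oo, alpha]); rewrite setTI preimage_itvNyc.
have c_ge0 : 0 <= expR eps * p by rewrite mulr_ge0 ?expR_ge0.
rewrite lawZE //; last by rewrite -preimage_itvoy -[X in measurable X]setTI; exact: mg.
apply: integral_gt_cst_eq0 => //.
- exact: measurable_densityZ.
- exact: densityZ_ge0.
- by rewrite integral_densityZ // ltry.
move=> S mS S_gt; rewrite -cond_integralE //; last first.
  by move=> z /S_gt /= /ltW; exact: le_trans.
rewrite -cond_g //; apply: jointXZ_le => // z.
by rewrite ysectionE; exact: (section_le (vhat z)).
Qed.
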